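(* Let $\mathcal{X}=\mathbb{V}^p$ for some $p\in\{0,1,\infty\}$ and let $\varphi$ be a dynamic LM-measure on $\mathcal{X}$. The following are equivalent: (1) $\varphi$ is semi-weakly acceptance time consistent, i.e. for all $V\in\mathcal{X}$, $t\in\mathbb{T}$ with $t<T$, and $m_{t+1}\in\bar L^0_{t+1}$: $\varphi_{t+1}(V)\ge m_{t+1}\Rightarrow\varphi_t(V)\ge 1_{\{V_t\ge0\}}\operatorname{Essinf}_t(m_{t+1})+1_{\{V_t<0\}}(-\infty)$; (2) for all $V\in\mathcal{X}$ and $t<T$: $\varphi_t(V)\ge 1_{\{V_t\ge0\}}\operatorname{Essinf}_t(\varphi_{t+1}(V))+1_{\{V_t<0\}}(-\infty)$; (3) for all $V\in\mathcal{X}$, $t<T$ and $m_t\in\bar L^0_t$: if $V_t\ge0$ and $\varphi_{t+1}(V)\ge m_t$, then $\varphi_t(V)\ge m_t$. Analogously, the following are equivalent: (1') $\varphi$ is semi-weakly rejection time consistent, i.e. $\varphi_{t+1}(V)\le m_{t+1}\Rightarrow\varphi_t(V)\le 1_{\{V_t\le0\}}\operatorname{Esssup}_t(m_{t+1})+1_{\{V_t>0\}}(+\infty)$ for all $V$, $t<T$, $m_{t+1}\in\bar L^0_{t+1}$; (2') $\varphi_t(V)\le 1_{\{V_t\le0\}}\operatorname{Esssup}_t(\varphi_{t+1}(V))+1_{\{V_t>0\}}(+\infty)$ for all $V$, $t<T$; (3') for all $V$, $t<T$, $m_t\in\bar L^0_t$: if $V_t\le0$ and $\varphi_{t+1}(V)\le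 m_t$ then $\varphi_t(V)\le m_t$.
   Context: Let $(\Omega,\mathcal{F},\{\mathcal{F}_t\}_{t\in\mathbb{T}},P)$ be a filtered probability space, $\mathbb{T}=\{0,\dots,T\}$, $\mathcal{F}_0$ trivial. $\bar L^0_t$ denotes $\mathcal{F}_t$-measurable random variables with values in $[-\infty,\infty]$; $L^p_t=L^p(\Omega,\mathcal{F}_t,P)$; $\mathbb{V}^p=\{(V_t)_{t\in\mathbb{T}}:V_t\in L^p_t\}$ ordered pointwise a.s. For $m\in L^\infty_t$, $m\cdot_tV:=(V_0,\dots,V_{t-1},mV_t,mV_{t+1},\dots)$. Conventions: $\infty-\infty=-\infty$, $0\cdot\pm\infty=0$. A dynamic LM-measure is a family $\{\varphi_t\}_{t\in\mathbb{T}}$ of maps $\varphi_t:\mathbb{V}^p\to\bar L^0_t$ with $1_A\varphi_t(V)=1_A\varphi_t(1_A\cdot_tV)$ for all $A\in\mathcal{F}_t$ and $V\le W\Rightarrow\varphi_t(V)\le\varphi_t(W)$. For bounded $X$, $\operatorname{Essinf}_tX$ is the largest $\mathcal{F}_t$-measurable random variable a.s. dominated by $X$, $\operatorname{Esssup}_tX=-\operatorname{Essinf}_t(-X)$; for $[-\infty,\infty]$-valued $X$, $\operatorname{Essinf}_tX:=\lim_n\operatorname{Essinf}_t(X^+\wedge n)-\lim_n\operatorname{Esssup}_t(X^-\wedge n)$ and $\operatorname{Esssup}_tX:=-\operatorname{Essinf}_t(-X)$. *)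

From HB Require Import structures.
From mathcomp Require Import all_boot all_order all_algebra.
From mathcomp Require Import all_classical all_reals all_analysis measurable_realfun.
From Stdlib Require ClassicalEpsilon.
Set Implicit Arguments. Unset Strict Implicit. Unset Printing Implicit Defensive.
Import Order.TTheory GRing.Theory Num.Theory.
Local Open Scope classical_set_scope.
Local Open Scope ring_scope.
Local Open Scope ereal_scope.

Section Defs.
Context {d : measure_display} {Omega : measurableType d} {R : realType}.

Definition meas_wrt (G : set (set Omega)) (X : Omega -> R) :=
  forall B : set R, measurable B -> G (X @^-1` B).
Definition emeas_wrt (G : set (set Omega)) (X : Omega -> \bar R) :=
  forall B : set (\bar R), measurable B -> G (X @^-1` B).

Definition is_filtration (F : nat -> set (set Omega)) :=
  [/\ (forall t, sigma_algebra setT (F t)),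
      (forall t, F t `<=` measurable),
      (forall s t, (s <= t)%N -> F s `<=` F t) &
      F 0%N = [set set0; setT]].

Inductive pexp := p0 | p1 | pinf.

(** L^p_t = L^p(Omega, F_t, P) (real valued, representatives) *)
Definition inLp (P : probability Omega R) (G : set (set Omega)) (p : pexp)
  (X : Omega -> R) :=
  meas_wrt G X /\
  match p with
  | p0 => True
  | p1 => P.-integrable setT (EFin \o X)
  | pinf => exists c : R, {ae P, forall w, (`|X w| <= c)%R}
  end.

Definition inL0bar (G : set (set Omega)) (X : Omega -> \bar R) := emeas_wrt G X.

(** processes V = (V_t)_{t in {0..T}} (indices > T are irrelevant) *)
Definition process := nat -> Omega -> R.

Definition inVp (P : probability Omega R) (F : nat -> set (set Omega))
  (T : nat) (p : pexp) (V : process) :=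
  forall t, (t <= T)%N -> inLp P (F t) p (V t).

Definition ple (P : probability Omega R) (T : nat) (V W : process) :=
  forall t, (t <= T)%N -> {ae P, forall w, (V t w <= W t w)%R}.

Definition mdot (t : nat) (m : Omega -> R) (V : process) : process :=
  fun s w => if (s < t)%N then V s w else (m w * V s w)%R.

Definition dynLM (P : probability Omega R) (F : nat -> set (set Omega))
  (T : nat) (p : pexp) (phi : nat -> process -> Omega -> \bar R) :=
  [/\ (forall t V, (t <= T)%N -> inVp P F T p V -> inL0bar (F t) (phi t V)),
      (forall t V (A : set Omega), (t <= T)%N -> inVp P F T p V -> F t A ->
         {ae P, forall w, (\1_A w)%:E * phi t V w
                          = (\1_A w)%:E * phi t (mdot t \1_A V) w}) &
      (forall t V W, (t <= T)%N -> inVp P F T p V -> inVp P F T p W ->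
         ple P T V W -> {ae P, forall w, phi t V w <= phi t W w})].

Definition is_essinf (P : probability Omega R) (G : set (set Omega))
  (X Y : Omega -> R) :=
  [/\ meas_wrt G Y, {ae P, forall w, (Y w <= X w)%R} &
      forall Z, meas_wrt G Z -> {ae P, forall w, (Z w <= X w)%R} ->
        {ae P, forall w, (Z w <= Y w)%R}].

Definition Essinfb (P : probability Omega R) (G : set (set Omega))
  (X : Omega -> R) : Omega -> R :=
  ClassicalEpsilon.epsilon (inhabits (fun _ => 0%R)) (is_essinf P G X).

Definition Esssupb (P : probability Omega R) (G : set (set Omega))
  (X : Omega -> R) : Omega -> R :=
  fun w => (- Essinfb P G (fun w' => - X w') w)%R.

Definition pos_trunc (X : Omega -> \bar R) (n : nat) : Omega -> R :=
  fun w => fine (mine (maxe (X w) 0) n%:R%:E).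
Definition neg_trunc (X : Omega -> \bar R) (n : nat) : Omega -> R :=
  fun w => fine (mine (maxe (- X w) 0) n%:R%:E).

(** Essinf_t X := lim_n Essinf_t(X^+ /\ n) - lim_n Esssup_t(X^- /\ n),
    with the convention oo - oo = -oo (that of mathcomp's adde). *)
Definition Essinf (P : probability Omega R) (G : set (set Omega))
  (X : Omega -> \bar R) : Omega -> \bar R :=
  fun w => limn (fun n => (Essinfb P G (pos_trunc X n) w)%:E)
         - limn (fun n => (Esssupb P G (neg_trunc X n) w)%:E).

Definition Esssup (P : probability Omega R) (G : set (set Omega))
  (X : Omega -> \bar R) : Omega -> \bar R :=
  fun w => - Essinf P G (fun w' => - X w') w.

Definition ege (P : probability Omega R) (X Y : Omega -> \bar R) :=
  {ae P, forall w, Y w <= X w}.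

End Defs.

From HB Require Import structures.
From mathcomp Require Import all_boot all_order all_algebra.
From mathcomp Require Import all_classical all_reals all_analysis measurable_realfun.
Import Order.TTheory GRing.Theory Num.Theory.
Local Open Scope classical_set_scope.
Local Open Scope ring_scope.
Local Open Scope ereal_scope.

(* (1) <-> (2): (2) is (1) for m = phi_{t+1}(V), and Essinf_t is monotone.
   (2) -> (3): an F_t-measurable m lies below its own Essinf_t.
   (3) -> (2): apply (3) to W = 1_{V_t >= 0} ._t V and to m equal to
   Essinf_t phi_{t+1}(V) on {V_t >= 0} and to -oo elsewhere; locality and
   monotonicity give phi_{t+1}(W) >= m, and phi_t(W) = phi_t(V) on {V_t >= 0}.
   The rejection statements are the acceptance ones for V |-> -phi(-V).
   Essential infima of bounded variables exist as G-measurable minorants of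
   maximal integral. *)

Section ereal_truncation.
Context {R : realType}.
Implicit Types (x y : \bar R) (u : (\bar R)^nat).

Definition etrunc x (n : nat) : R := fine (mine x n%:R%:E).

Lemma etruncE x n : 0 <= x -> (etrunc x n)%:E = mine x n%:R%:E.
Proof.
move=> x0; rewrite /etrunc fineK // ge0_fin_numE; last by rewrite le_min x0 /= lee_fin ler0n.
by rewrite gt_min ltry orbT.
Qed.

Lemma etrunc_ge0 x n : 0 <= x -> (0 <= etrunc x n)%R.
Proof. by move=> x0; rewrite -lee_fin etruncE // le_min x0 /= lee_fin ler0n. Qed.

Lemma etrunc_le x n : 0 <= x -> (etrunc x n <= n%:R)%R.
Proof. by move=> x0; rewrite -lee_fin etruncE // ge_min lexx orbT. Qed.

Lemma le_etrunc x y n : 0 <= x -> x <= y -> (etrunc x n <= etrunc y n)%R.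
Proof.
move=> x0 xy; rewrite -lee_fin !etruncE //; last exact: le_trans xy.
by rewrite le_min !ge_min xy lexx !orbT.
Qed.

Lemma etrunc_nondecreasing x n : 0 <= x -> (etrunc x n <= etrunc x n.+1)%R.
Proof.
move=> x0; rewrite -lee_fin !etruncE // le_min !ge_min lexx lee_fin ler_nat.
by rewrite leqnSn !orbT.
Qed.

Lemma ereal_sup_etrunc x : 0 <= x -> ereal_sup (range (fun n => (etrunc x n)%:E)) = x.
Proof.
move=> x0; apply/eqP; rewrite eq_le; apply/andP; split.
  by apply: ge_ereal_sup => _ [n _ <-]; rewrite etruncE // ge_min lexx.
have ub n : mine x n%:R%:E <= ereal_sup (range (fun n => (etrunc x n)%:E)).
  by rewrite -etruncE //; apply: ereal_sup_ubound; exists n.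
move: (ereal_sup _) ub => s ub.
case: x x0 ub => [r| |] // x0 ub.
  by apply: le_trans (ub (Num.truncn r).+1); rewrite le_min lexx lee_fin ltW ?truncnS_gt.
have s0 : 0 <= s by apply: le_trans (ub 0%N); rewrite (min_idPr (leey _)) lee_fin.
case: s s0 ub => [r| |] // _ ub; have := ub (Num.truncn r).+1.
by rewrite (min_idPr (leey _)) lee_fin leNgt truncnS_gt.
Qed.

Lemma limn_nondecreasing u : nondecreasing_seq u -> limn u = ereal_sup (range u).
Proof. by move/ereal_nondecreasing_cvgn/cvg_lim; apply. Qed.

Lemma ereal_sup_range_le u v : (forall n, u n <= v n) ->
  ereal_sup (range u) <= ereal_sup (range v).
Proof.
move=> uv; apply: ge_ereal_sup => _ [n _ <-].
by apply: le_trans (uv n) _; apply: ereal_sup_ubound; exists n.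
Qed.

Lemma maxe0_ge0 x : 0 <= maxe x 0.
Proof. by rewrite le_max lexx orbT. Qed.

Lemma ereal_pos_neg x : x = maxe x 0 - maxe (- x) 0.
Proof.
have [x0|x0] := leP 0 x.
  by rewrite (max_idPr _) ?sube0 // leeNl oppe0.
by rewrite (max_idPl _) ?sub0e ?oppeK // leeNr oppe0 ltW.
Qed.

End ereal_truncation.

Section bounded_integral.
Context {d : measure_display} {Omega : measurableType d} {R : realType}.
Implicit Types (X Y W : Omega -> R) (c : R).

Lemma ae_eq_of_le_integral (mu : {measure set Omega -> \bar R}) Y W :
  mu.-integrable setT (EFin \o Y) -> mu.-integrable setT (EFin \o W) ->
  (forall w, Y w <= W w)%R -> \int[mu]_w (W w)%:E <= \int[mu]_w (Y w)%:E ->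
  {ae mu, forall w, W w = Y w}.
Proof.
move=> iY iW YW WY.
have mWY : measurable_fun setT (fun w => ((W w - Y w)%R)%:E).
  by apply/measurable_EFinP/measurable_funB; apply/measurable_EFinP;
    [exact: measurable_int iW|exact: measurable_int iY].
have gap0 : \int[mu]_w `|((W w - Y w)%R)%:E| = 0.
  apply/eqP; rewrite eq_le integral_ge0 // andbT.
  under eq_integral do rewrite gee0_abs ?lee_fin ?subr_ge0 // EFinB.
  by rewrite integralB_EFin // sube_le0.
have := (ae_eq_integral_abs mu measurableT mWY).1 gap0.
by apply: filterS => w /(_ I) /eqP; rewrite eqe subr_eq0 => /eqP.
Qed.

Variable P : probability Omega R.

Lemma integrable_bounded X c : measurable_fun setT X ->
  (forall w, `|X w| <= c)%R -> P.-integrable setT (EFin \o X).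
Proof.
move=> mX Xc; apply: (le_integrable measurableT _ _
  (finite_measure_integrable_cst P c measurableT)); first exact/measurable_EFinP.
by move=> w _ /=; rewrite lee_fin (le_trans (Xc w)) // ler_norm.
Qed.

Lemma abse_integral_bounded X c : measurable_fun setT X ->
  (forall w, `|X w| <= c)%R -> `|\int[P]_w (X w)%:E| <= c%:E.
Proof.
move=> mX Xc; apply: le_trans (le_abse_integral _ _ _) _ => //.
  exact/measurable_EFinP.
have -> : c%:E = \int[P]_w (cst c%:E w).
  by rewrite integral_cst // [X in _ * X]probability_setT mule1.
apply: ge0_le_integral => //.
- exact/measurableT_comp/measurable_EFinP.
- by move=> w _; rewrite /= lee_fin.
Qed.

End bounded_integral.

Section sub_sigma_algebra.
Context {d : measure_display} {Omega : measurableType d} {R : realType}.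
Context {G : set (set Omega)}.
Hypotheses (sigmaG : sigma_algebra setT G) (subG : G `<=` measurable).
Local Notation OmegaG := (g_sigma_algebraType G).

Lemma preimage_measurableP d' (U : measurableType d') (X : Omega -> U) :
  (forall B, measurable B -> G (X @^-1` B)) <-> measurable_fun [set: OmegaG] X.
Proof.
have GE := measurable_g_measurableTypeE sigmaG.
split=> [XG _ B mB|mX B mB]; first by rewrite setTI GE; exact: XG.
by have := mX measurableT B mB; rewrite setTI GE.
Qed.

Lemma meas_wrtP (X : Omega -> R) :
  meas_wrt G X <-> measurable_fun [set: OmegaG] X.
Proof. exact: preimage_measurableP. Qed.

Lemma emeas_wrtP (X : Omega -> \bar R) :
  emeas_wrt G X <-> measurable_fun [set: OmegaG] X.
Proof. exact: preimage_measurableP. Qed.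

Lemma meas_wrtN (X : Omega -> R) : meas_wrt G X -> meas_wrt G (fun w => - X w)%R.
Proof. by move=> /meas_wrtP mX; apply/meas_wrtP/measurable_funN. Qed.

Lemma emeas_wrtN (X : Omega -> \bar R) : emeas_wrt G X -> emeas_wrt G (fun w => - X w).
Proof. by move=> /emeas_wrtP mX; apply/emeas_wrtP; exact: measurableT_comp. Qed.

Lemma measurable_fun_sub_sigma d' (U : measurableType d') (X : Omega -> U) :
  measurable_fun [set: OmegaG] X -> measurable_fun [set: Omega] X.
Proof.
by move=> /preimage_measurableP XG _ B mB; rewrite setTI; exact/subG/XG.
Qed.

End sub_sigma_algebra.

Section sups0.
Context {R : realType}.
Implicit Types (u : R^nat) (x : R).

Lemma le_sups0 u x : (forall n, u n <= x)%R -> forall k, (u k <= sups u 0)%R.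
Proof. by move=> ux k; apply: ub_le_sup; [exists x => _ [n _ <-]|exists k]. Qed.

Lemma sups0_le u x : (forall n, u n <= x)%R -> (sups u 0 <= x)%R.
Proof. by move=> ux; apply: ge_sup; [exists (u 0%N), 0%N|move=> _ [n _ <-]]. Qed.

End sups0.

Section essinf_existence.
Context {d : measure_display} {Omega : measurableType d} {R : realType}.
Variables (P : probability Omega R) (G : set (set Omega)).
Hypotheses (sigmaG : sigma_algebra setT G) (subG : G `<=` measurable).
Local Notation OmegaG := (g_sigma_algebraType G).
Variables (X : Omega -> R) (c : R).
Hypothesis Xc : forall w, (`|X w| <= c)%R.
Implicit Types Y Z : Omega -> R.

Let minorant (Z : Omega -> R) := [/\ measurable_fun [set: OmegaG] Z,
  (forall w, `|Z w| <= c)%R & {ae P, forall w, (Z w <= X w)%R}].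

Let minorant_integrable Z : minorant Z -> P.-integrable setT (EFin \o Z).
Proof.
by case=> mZ Zc _; apply: integrable_bounded Zc; exact: measurable_fun_sub_sigma sigmaG subG _ _ _ mZ.
Qed.

Let minorant_integral_bound Z : minorant Z -> `|\int[P]_w (Z w)%:E| <= c%:E.
Proof.
by case=> mZ Zc _; apply: abse_integral_bounded Zc; exact: measurable_fun_sub_sigma sigmaG subG _ _ _ mZ.
Qed.

Let minorant_integral_fin Z : minorant Z -> \int[P]_w (Z w)%:E \is a fin_num.
Proof. by move=> /minorant_integral_bound Zc; rewrite fin_num_abs (le_lt_trans Zc) ?ltry. Qed.

Let minorant_cst : minorant (cst (- c)%R).
Proof.
split; first exact: measurable_cst.
  by move=> w; rewrite /= normrN ger0_norm // (le_trans _ (Xc w)).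
by apply: aeW => w /=; move: (Xc w); rewrite ler_norml => /andP[].
Qed.

Let minorant_sups (Zs : (Omega -> R)^nat) : (forall k, minorant (Zs k)) ->
  minorant (fun w => sups (Zs ^~ w) 0%N).
Proof.
move=> Zsm; have Zsc k w : (Zs k w <= c)%R.
  by case: (Zsm k) => _ Zc _; exact: le_trans (ler_norm _) (Zc w).
split.
- apply: measurable_fun_sups => [w _|k]; last by case: (Zsm k).
  by exists c => _ [k _ <-].
- move=> w; rewrite ler_norml; apply/andP; split; last exact: sups0_le.
  apply: le_trans (@le_sups0 _ (Zs ^~ w) c (Zsc ^~ w) 0%N); case: (Zsm 0%N) => _ Zc _.
  by move: (Zc w); rewrite ler_norml => /andP[].
- have : {ae P, forall w, forall k, (Zs k w <= X w)%R}.
    by apply: ae_foralln => k; case: (Zsm k).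
  by apply: filterS => w; exact: sups0_le.
Qed.

Let minorant_max Y Z : minorant Y -> measurable_fun [set: OmegaG] Z ->
  {ae P, forall w, (Z w <= X w)%R} -> minorant (fun w => Num.max (Y w) (Num.min (Z w) c)).
Proof.
case=> mY Yc YX mZ ZX; split.
- by apply: measurable_maxr => //; apply: measurable_minr.
- move=> w; rewrite ler_norml le_max ge_max ge_min lexx orbT andbT.
  move: (Yc w); rewrite ler_norml => /andP[-> Yw] /=.
  by rewrite Yw.
- by apply: filterS2 YX ZX => w YXw ZXw; rewrite ge_max YXw ge_min ZXw.
Qed.

Let minorant_integral_maximizer : exists2 Y, minorant Y &
  forall Z, minorant Z -> \int[P]_w (Z w)%:E <= \int[P]_w (Y w)%:E.
Proof.
pose s := ereal_sup [set \int[P]_w (Z w)%:E | Z in minorant].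
have s_fin : s \is a fin_num.
  apply/fin_numPlt/andP; split.
    apply: lt_le_trans (ereal_sup_ubound _); last by exists (cst (- c)%R).
    by have /fin_numPlt/andP[] := minorant_integral_fin _ minorant_cst.
  apply: le_lt_trans (ltry c); apply: ge_ereal_sup => _ [Z mZ <-].
  exact: le_trans (lee_abs _) (minorant_integral_bound _ mZ).
have approx k : exists Z, minorant Z /\
    (fine s - k.+1%:R^-1)%:E < \int[P]_w (Z w)%:E.
  have : (fine s - k.+1%:R^-1)%:E < s.
    by rewrite -[ltRHS](fineK s_fin) lte_fin ltrBlDr ltrDl invr_gt0.
  by move=> /ereal_sup_gt [_ [Z mZ <-] sZ]; exists Z.
have [Zs Zsm] := choice approx.
pose Y w := sups (Zs ^~ w) 0%N.
have mY : minorant Y by apply: minorant_sups => k; case: (Zsm k).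
exists Y => // Z mZ; apply: le_trans (_ : s <= _).
  by apply: ereal_sup_ubound; exists Z.
have := minorant_integral_fin _ mY; set IY := \int[P]_w _ => IY_fin.
rewrite -(fineK s_fin) -(fineK IY_fin) lee_fin leNgt; apply/negP.
move=> /ltr_add_invr [k]; rewrite -ltrBrDr -lte_fin fineK // => IY_lt.
apply/negP: (lt_trans IY_lt (Zsm k).2); rewrite -leNgt; apply: le_integral => //.
- exact: minorant_integrable _ (Zsm k).1.
- exact: minorant_integrable.
- move=> w _; rewrite lee_fin; apply: le_sups0 => n.
  by case: (Zsm n).1 => _ Zc _; exact: le_trans (ler_norm _) (Zc w).
Qed.

Lemma is_essinf_exists : exists Y, is_essinf P G X Y.
Proof.
have [Y mY Ymax] := minorant_integral_maximizer.
have [mYG Yc YX] := mY.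
exists Y; split => //; first exact/(meas_wrtP sigmaG).
move=> Z /(meas_wrtP sigmaG) mZ ZX.
pose W w := Num.max (Y w) (Num.min (Z w) c).
have mW : minorant W by exact: minorant_max.
have WY : {ae P, forall w, W w = Y w}.
  apply: ae_eq_of_le_integral; [exact: minorant_integrable..| |exact: Ymax].
  by move=> w; rewrite le_max lexx.
apply: filterS2 WY ZX => w WYw ZXw.
have : (Num.min (Z w) c <= Y w)%R by rewrite -WYw le_max lexx orbT.
rewrite ge_min => /orP[//|cY].
by apply: le_trans cY; exact: le_trans ZXw (le_trans (ler_norm _) (Xc w)).
Qed.

End essinf_existence.

Lemma measurable_fun_ereal_sup_range {d' : measure_display} {T : measurableType d'}
    {R : realType} (D : set T) (f : (T -> \bar R)^nat) :
  (forall n, measurable_fun D (f n)) ->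
  measurable_fun D (fun x => ereal_sup (range (f ^~ x))).
Proof.
move=> mf; rewrite (_ : (fun x => _) = fun x => esups (f ^~ x) 0%N).
  exact: measurable_fun_esups.
apply/funext => x; congr ereal_sup.
by apply/seteqP; split=> _ [k _ <-]; exists k.
Qed.

Section conditional_essinf.
Context {d : measure_display} {Omega : measurableType d} {R : realType}.
Variables (P : probability Omega R) (G : set (set Omega)).
Hypotheses (sigmaG : sigma_algebra setT G) (subG : G `<=` measurable).
Implicit Types (X Y : Omega -> R) (m : Omega -> \bar R).

Definition bounded X := exists c : R, forall w, (`|X w| <= c)%R.

Lemma boundedN X : bounded X -> bounded (fun w => - X w)%R.
Proof. by case=> c Xc; exists c => w; rewrite normrN. Qed.

Lemma Essinfb_spec X : bounded X -> is_essinf P G X (Essinfb P G X).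
Proof.
case=> c Xc; apply: ClassicalEpsilon.epsilon_spec.
exact: is_essinf_exists sigmaG subG _ _ Xc.
Qed.

Lemma Essinfb_id X : meas_wrt G X -> {ae P, forall w, Essinfb P G X w = X w}.
Proof.
move=> mX; have [_ leX maxX] : is_essinf P G X (Essinfb P G X).
  by apply: ClassicalEpsilon.epsilon_spec; exists X; split => //; exact: aeW.
apply: filterS2 leX (maxX X mX (aeW _ (fun w => lexx (X w)))) => w le1 le2.
by apply/eqP; rewrite eq_le le1 le2.
Qed.

Lemma Essinfb_meas_wrt X : bounded X -> meas_wrt G (Essinfb P G X).
Proof. by move/Essinfb_spec => []. Qed.

Lemma Essinfb_le X : bounded X -> {ae P, forall w, (Essinfb P G X w <= X w)%R}.
Proof. by move/Essinfb_spec => []. Qed.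

Lemma le_Essinfb X Y : bounded X -> bounded Y -> {ae P, forall w, (X w <= Y w)%R} ->
  {ae P, forall w, (Essinfb P G X w <= Essinfb P G Y w)%R}.
Proof.
move=> /Essinfb_spec[mX leX _] /Essinfb_spec[_ _ maxY] XY; apply: maxY mX _.
by apply: filterS2 leX XY => w; exact: le_trans.
Qed.

Lemma Esssupb_id X : meas_wrt G X -> {ae P, forall w, Esssupb P G X w = X w}.
Proof.
by move=> /(meas_wrtN sigmaG) /Essinfb_id; apply: filterS => w; rewrite /Esssupb => ->; rewrite opprK.
Qed.

Lemma Esssupb_meas_wrt X : bounded X -> meas_wrt G (Esssupb P G X).
Proof. by move=> /boundedN /Essinfb_meas_wrt /(meas_wrtN sigmaG). Qed.

Lemma Esssupb_ge X : bounded X -> {ae P, forall w, (X w <= Esssupb P G X w)%R}.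
Proof. by move=> /boundedN /Essinfb_le; apply: filterS => w; rewrite /Esssupb lerNr. Qed.

Lemma le_Esssupb X Y : bounded X -> bounded Y -> {ae P, forall w, (X w <= Y w)%R} ->
  {ae P, forall w, (Esssupb P G X w <= Esssupb P G Y w)%R}.
Proof.
move=> bX bY XY; have NYX : {ae P, forall w, (- Y w <= - X w)%R}.
  by apply: filterS XY => w; rewrite lerN2.
by apply: filterS (le_Essinfb _ _ (boundedN _ bY) (boundedN _ bX) NYX) => w; rewrite lerN2.
Qed.

Lemma bounded_pos_trunc m n : bounded (pos_trunc m n).
Proof.
exists n%:R => w; rewrite /pos_trunc -/(etrunc _ n).
by rewrite ger0_norm ?etrunc_ge0 ?etrunc_le ?maxe0_ge0.
Qed.

Lemma bounded_neg_trunc m n : bounded (neg_trunc m n).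
Proof. exact: bounded_pos_trunc. Qed.

Lemma pos_trunc_meas_wrt m n : emeas_wrt G m -> meas_wrt G (pos_trunc m n).
Proof.
move=> /(emeas_wrtP sigmaG) mm; apply/(meas_wrtP sigmaG).
apply: measurableT_comp; first exact: fine_measurable.
by apply: measurable_mine => //; exact: measurable_maxe.
Qed.

Lemma neg_trunc_meas_wrt m n : emeas_wrt G m -> meas_wrt G (neg_trunc m n).
Proof.
move=> /(emeas_wrtP sigmaG) mm; apply: pos_trunc_meas_wrt.
by apply/(emeas_wrtP sigmaG); exact: measurableT_comp.
Qed.

(* The a.e. nondecreasing limits defining [Essinf] replaced by suprema: this
   version is G-measurable everywhere and agrees with [Essinf] a.e. *)
Definition Essinf_sup m w :=
  ereal_sup (range (fun n => (Essinfb P G (pos_trunc m n) w)%:E))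
  - ereal_sup (range (fun n => (Esssupb P G (neg_trunc m n) w)%:E)).

Lemma Essinf_supE m : {ae P, forall w, Essinf P G m w = Essinf_sup m w}.
Proof.
have pos_nd : {ae P, forall w, forall n,
    (Essinfb P G (pos_trunc m n) w <= Essinfb P G (pos_trunc m n.+1) w)%R}.
  apply: ae_foralln => n; apply: le_Essinfb; try exact: bounded_pos_trunc.
  by apply: aeW => w; apply: etrunc_nondecreasing; exact: maxe0_ge0.
have neg_nd : {ae P, forall w, forall n,
    (Esssupb P G (neg_trunc m n) w <= Esssupb P G (neg_trunc m n.+1) w)%R}.
  apply: ae_foralln => n; apply: le_Esssupb; try exact: bounded_neg_trunc.
  by apply: aeW => w; apply: etrunc_nondecreasing; exact: maxe0_ge0.
apply: filterS2 pos_nd neg_nd => w pos_ndw neg_ndw.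
by rewrite /Essinf !limn_nondecreasing //; apply/nondecreasing_seqP => n; rewrite lee_fin.
Qed.

Lemma Essinf_sup_meas_wrt m : emeas_wrt G (Essinf_sup m).
Proof.
apply/(emeas_wrtP sigmaG); apply: emeasurable_funB;
  apply: measurable_fun_ereal_sup_range => n; apply/measurable_EFinP/(meas_wrtP sigmaG).
  by apply: Essinfb_meas_wrt; exact: bounded_pos_trunc.
by apply: Esssupb_meas_wrt; exact: bounded_neg_trunc.
Qed.

Lemma Essinf_le m : {ae P, forall w, Essinf P G m w <= m w}.
Proof.
have pos_le : {ae P, forall w, forall n,
    (Essinfb P G (pos_trunc m n) w <= pos_trunc m n w)%R}.
  by apply: ae_foralln => n; apply: Essinfb_le; exact: bounded_pos_trunc.
have neg_ge : {ae P, forall w, forall n,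
    (neg_trunc m n w <= Esssupb P G (neg_trunc m n) w)%R}.
  by apply: ae_foralln => n; apply: Esssupb_ge; exact: bounded_neg_trunc.
apply: filterS2 (Essinf_supE m) (filterI pos_le neg_ge) => w -> [pos_lew neg_gew].
rewrite [leRHS]ereal_pos_neg; apply: leeB.
  apply: ge_ereal_sup => _ [n _ <-]; apply: le_trans (_ : (pos_trunc m n w)%:E <= _).
    by rewrite lee_fin.
  by rewrite /pos_trunc -/(etrunc _ n) etruncE ?ge_min ?lexx ?maxe0_ge0.
rewrite -[leLHS](ereal_sup_etrunc _ (maxe0_ge0 (- m w))).
by apply: ereal_sup_range_le => n; rewrite lee_fin; exact: neg_gew.
Qed.

Lemma le_Essinf m1 m2 : {ae P, forall w, m1 w <= m2 w} ->
  {ae P, forall w, Essinf P G m1 w <= Essinf P G m2 w}.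
Proof.
move=> m12.
have pos_le : {ae P, forall w, forall n,
    (Essinfb P G (pos_trunc m1 n) w <= Essinfb P G (pos_trunc m2 n) w)%R}.
  apply: ae_foralln => n; apply: le_Essinfb; try exact: bounded_pos_trunc.
  apply: filterS m12 => w m12w; apply: le_etrunc; first exact: maxe0_ge0.
  by rewrite ge_max !le_max m12w lexx !orbT.
have neg_ge : {ae P, forall w, forall n,
    (Esssupb P G (neg_trunc m2 n) w <= Esssupb P G (neg_trunc m1 n) w)%R}.
  apply: ae_foralln => n; apply: le_Esssupb; try exact: bounded_neg_trunc.
  apply: filterS m12 => w m12w; apply: le_etrunc; first exact: maxe0_ge0.
  by rewrite ge_max !le_max leeN2 m12w lexx !orbT.
apply: filterS2 (filterI (Essinf_supE m1) (Essinf_supE m2)) (filterI pos_le neg_ge).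
move=> w [-> ->] [pos_lew neg_gew].
by apply: leeB; apply: ereal_sup_range_le => n; rewrite lee_fin; [exact: pos_lew|exact: neg_gew].
Qed.

Lemma Essinf_ge m : emeas_wrt G m -> {ae P, forall w, m w <= Essinf P G m w}.
Proof.
move=> mm.
have pos_id : {ae P, forall w, forall n, Essinfb P G (pos_trunc m n) w = pos_trunc m n w}.
  by apply: ae_foralln => n; apply/Essinfb_id/pos_trunc_meas_wrt.
have neg_id : {ae P, forall w, forall n, Esssupb P G (neg_trunc m n) w = neg_trunc m n w}.
  by apply: ae_foralln => n; apply/Esssupb_id/neg_trunc_meas_wrt.
apply: filterS2 (Essinf_supE m) (filterI pos_id neg_id) => w -> [pos_idw neg_idw].
rewrite /Essinf_sup.
have -> : (fun n => (Essinfb P G (pos_trunc m n) w)%:E) = fun n => (pos_trunc m n w)%:E.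
  by apply/funext => n; rewrite pos_idw.
have -> : (fun n => (Esssupb P G (neg_trunc m n) w)%:E) = fun n => (neg_trunc m n w)%:E.
  by apply/funext => n; rewrite neg_idw.
by rewrite !ereal_sup_etrunc ?maxe0_ge0 // -ereal_pos_neg.
Qed.

End conditional_essinf.

Section processes.
Context {d : measure_display} {Omega : measurableType d} {R : realType}.
Context {P : probability Omega R}.
Local Notation process := (@process d Omega R).
Implicit Types (V : process) (X : Omega -> R) (A : set Omega).

Definition oppV V : process := fun s w => (- V s w)%R.

Lemma oppVE V s w : oppV V s w = (- V s w)%R.
Proof. by []. Qed.

Lemma oppVK V : oppV (oppV V) = V.
Proof. by apply/funext => s; apply/funext => w; rewrite /oppV opprK. Qed.

Lemma mdot_oppV t m V : mdot t m (oppV V) = oppV (mdot t m V).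
Proof.
by apply/funext => s; apply/funext => w; rewrite /mdot /oppV; case: ifP; rewrite ?mulrN.
Qed.

Lemma inLpN G p X : sigma_algebra setT G -> inLp P G p X -> inLp P G p (fun w => - X w)%R.
Proof.
move=> sigmaG [mX Xp]; split; first exact: meas_wrtN sigmaG _ mX.
case: p Xp => // [iX|[c Xc]]; last by exists c; apply: filterS Xc => w; rewrite normrN.
by rewrite (_ : EFin \o _ = -%E \o (EFin \o X)); [exact: integrableN|apply/funext => w].
Qed.

Lemma inLp_indicM G p A X : sigma_algebra setT G -> G `<=` measurable -> G A ->
  inLp P G p X -> inLp P G p (fun w => \1_A w * X w)%R.
Proof.
move=> sigmaG subG GA [/(meas_wrtP sigmaG) mX Xp].
have mAX : measurable_fun [set: g_sigma_algebraType G] (fun w => \1_A w * X w)%R.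
  apply: measurable_funM => //; apply: measurable_indic.
  by rewrite (measurable_g_measurableTypeE sigmaG).
have AX_le w : (`|\1_A w * X w| <= `|X w|)%R.
  by rewrite indicE normrM; case: (w \in A); rewrite ?normr1 ?mul1r ?normr0 ?mul0r.
split; first exact/(meas_wrtP sigmaG).
case: p Xp => // [iX|[c Xc]].
  apply: (le_integrable measurableT _ _ iX); last by move=> w _; rewrite /= lee_fin.
  exact/measurable_EFinP/(measurable_fun_sub_sigma sigmaG subG).
exists (Num.max c 0%R); apply: filterS Xc => w Xcw.
by apply: le_trans (AX_le w) _; rewrite le_max Xcw.
Qed.

Context {F : nat -> set (set Omega)} {T : nat} {p : pexp}.
Hypothesis hF : is_filtration F.

Lemma filtration_sigma t : sigma_algebra setT (F t).
Proof. by case: hF. Qed.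

Lemma filtration_sub t : F t `<=` measurable.
Proof. by case: hF. Qed.

Lemma filtration_mono s t : (s <= t)%N -> F s `<=` F t.
Proof. by case: hF => _ _ + _; apply. Qed.

Lemma inVpN V : inVp P F T p V -> inVp P F T p (oppV V).
Proof. by move=> hV s sT; exact: inLpN _ _ _ (filtration_sigma s) (hV s sT). Qed.

Lemma inVp_mdot t A V : F t A -> inVp P F T p V -> inVp P F T p (mdot t \1_A V).
Proof.
move=> FA hV s sT; rewrite /mdot; case: ltnP => ts; first exact: hV.
apply: inLp_indicM _ _ _ _ (filtration_sigma s) (filtration_sub s) _ (hV s sT).
exact: filtration_mono ts _ FA.
Qed.

End processes.

Section sign_bounds.
Context {Omega : Type} {R : realType}.
Variables (f : Omega -> R) (w : Omega) (x : \bar R).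

Lemma indic_nonneg_boundE :
  (\1_[set w' | (0 <= f w')%R] w)%:E * x + (\1_[set w' | (f w' < 0)%R] w)%:E * -oo
  = if (0 <= f w)%R then x else -oo.
Proof.
rewrite !indicE; have [f0|f0] := leP 0%R (f w).
  by rewrite mem_set // memNset ?mul1e ?mul0e ?adde0 //; apply/negP; rewrite -leNgt.
by rewrite memNset ?mem_set ?mul1e ?mul0e ?add0e //; apply/negP; rewrite -ltNge.
Qed.

Lemma indic_nonpos_boundE :
  (\1_[set w' | (f w' <= 0)%R] w)%:E * x + (\1_[set w' | (0 < f w')%R] w)%:E * +oo
  = if (f w <= 0)%R then x else +oo.
Proof.
rewrite !indicE; have [f0|f0] := leP (f w) 0%R.
  by rewrite mem_set // memNset ?mul1e ?mul0e ?adde0 //; apply/negP; rewrite -leNgt.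
by rewrite memNset ?mem_set ?mul1e ?mul0e ?add0e //; apply/negP; rewrite -ltNge.
Qed.

End sign_bounds.

Section semiweak_time_consistency.
Context {d : measure_display} {Omega : measurableType d} {R : realType}.
Variables (P : probability Omega R) (F : nat -> set (set Omega)) (T : nat) (p : pexp).
Local Notation process := (@process d Omega R).
Implicit Types (phi : nat -> process -> Omega -> \bar R) (V : process).

Definition semiweak_acceptance phi := forall V t (m : Omega -> \bar R),
  inVp P F T p V -> (t < T)%N -> inL0bar (F t.+1) m ->
  ege P (phi t.+1 V) m ->
  ege P (phi t V) (fun w => (\1_[set w' | (0 <= V t w')%R] w)%:E
                              * Essinf P (F t) m w
                            + (\1_[set w' | (V t w' < 0)%R] w)%:E * -oo).

Definition semiweak_acceptance_Essinf phi := forall V t,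
  inVp P F T p V -> (t < T)%N ->
  ege P (phi t V) (fun w => (\1_[set w' | (0 <= V t w')%R] w)%:E
                              * Essinf P (F t) (phi t.+1 V) w
                            + (\1_[set w' | (V t w' < 0)%R] w)%:E * -oo).

Definition semiweak_acceptance_nonneg phi := forall V t (m : Omega -> \bar R),
  inVp P F T p V -> (t < T)%N -> inL0bar (F t) m ->
  {ae P, forall w, (0 <= V t w)%R} ->
  ege P (phi t.+1 V) m -> ege P (phi t V) m.

Definition semiweak_rejection phi := forall V t (m : Omega -> \bar R),
  inVp P F T p V -> (t < T)%N -> inL0bar (F t.+1) m ->
  ege P m (phi t.+1 V) ->
  ege P (fun w => (\1_[set w' | (V t w' <= 0)%R] w)%:E
                    * Esssup P (F t) m w
                  + (\1_[set w' | (0 < V t w')%R] w)%:E * +oo) (phi t V).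

Definition semiweak_rejection_Esssup phi := forall V t,
  inVp P F T p V -> (t < T)%N ->
  ege P (fun w => (\1_[set w' | (V t w' <= 0)%R] w)%:E
                    * Esssup P (F t) (phi t.+1 V) w
                  + (\1_[set w' | (0 < V t w')%R] w)%:E * +oo) (phi t V).

Definition semiweak_rejection_nonpos phi := forall V t (m : Omega -> \bar R),
  inVp P F T p V -> (t < T)%N -> inL0bar (F t) m ->
  {ae P, forall w, (V t w <= 0)%R} ->
  ege P m (phi t.+1 V) -> ege P m (phi t V).

End semiweak_time_consistency.

Section acceptance.
Context {d : measure_display} {Omega : measurableType d} {R : realType}.
Local Notation process := (@process d Omega R).
Implicit Types V : process.

Definition nonneg_restrict t V : process := mdot t \1_[set w | (0 <= V t w)%R] V.

Lemma nonneg_restrict_ge0 t V w : (0 <= nonneg_restrict t V t w)%R.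
Proof.
rewrite /nonneg_restrict /mdot ltnn indicE.
case: (boolP (0 <= V t w)%R) => V0; first by rewrite mem_set ?mul1r.
by rewrite memNset ?mul0r //; apply/negP.
Qed.

Lemma le_mdot_succ_nonneg_restrict t V s w :
  (mdot t.+1 \1_[set w | (0 <= V t w)%R] V s w <= nonneg_restrict t V s w)%R.
Proof.
rewrite /nonneg_restrict /mdot ltnS; case: ltngtP => // ->; rewrite indicE.
case: (boolP (0 <= V t w)%R) => V0; first by rewrite mem_set ?mul1r.
by rewrite memNset ?mul0r; [rewrite ltW // ltNge|apply/negP].
Qed.

Context {P : probability Omega R} {F : nat -> set (set Omega)} {T : nat} {p : pexp}.
Hypothesis hF : is_filtration F.

Lemma nonneg_event_meas t V : (t <= T)%N -> inVp P F T p V ->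
  F t [set w | (0 <= V t w)%R].
Proof.
move=> tT hV; have sigmaF := filtration_sigma hF t.
have mVt := (meas_wrtP sigmaF _).1 (hV t tT).1.
have := measurable_fun_le measurableT (measurable_cst (0%R : R)) mVt.
by rewrite setTI (measurable_g_measurableTypeE sigmaF).
Qed.

Lemma inVp_nonneg_restrict t V : (t <= T)%N -> inVp P F T p V ->
  inVp P F T p (nonneg_restrict t V).
Proof. by move=> tT hV; exact: (inVp_mdot hF _ _ _ (nonneg_event_meas _ _ tT hV) hV). Qed.

Context {phi : nat -> process -> Omega -> \bar R}.
Hypothesis hphi : dynLM P F T p phi.

Lemma dynLM_local t (A : set Omega) V : (t <= T)%N -> inVp P F T p V -> F t A ->
  {ae P, forall w, A w -> phi t V w = phi t (mdot t \1_A V) w}.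
Proof.
case: hphi => _ loc _ tT hV FA; apply: filterS (loc t V A tT hV FA) => w.
by rewrite indicE => + /mem_set wA; rewrite wA !mul1e.
Qed.

Lemma dynLM_nonneg_restrict t V : (t <= T)%N -> inVp P F T p V ->
  {ae P, forall w, (0 <= V t w)%R -> phi t V w = phi t (nonneg_restrict t V) w}.
Proof. by move=> tT hV; apply: dynLM_local _ _ _ tT hV (nonneg_event_meas _ _ tT hV). Qed.

(* On {V_t >= 0}, locality at t+1 replaces V by 1_{V_t >= 0} ._{t+1} V, which
   lies below 1_{V_t >= 0} ._t V since the two differ only at time t. *)
Lemma dynLM_succ_le_nonneg_restrict t V : (t < T)%N -> inVp P F T p V ->
  {ae P, forall w, (0 <= V t w)%R ->
                   phi t.+1 V w <= phi t.+1 (nonneg_restrict t V) w}.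
Proof.
move=> tT hV; set A := [set w | (0 <= V t w)%R].
have FA : F t.+1 A := filtration_mono hF _ _ (leqnSn t) _ (nonneg_event_meas _ _ (ltnW tT) hV).
case: hphi => _ _ mono.
have := mono t.+1 _ _ tT (inVp_mdot hF _ _ _ FA hV) (inVp_nonneg_restrict _ _ (ltnW tT) hV).
move=> /(_ (fun s _ => aeW _ (le_mdot_succ_nonneg_restrict t V s))) le_ae.
move: (dynLM_local _ _ _ tT hV FA) le_ae; apply: filterS2 => w loc le Aw.
by rewrite loc.
Qed.

Lemma semiweak_acceptance_EssinfP :
  semiweak_acceptance P F T p phi <-> semiweak_acceptance_Essinf P F T p phi.
Proof.
have sigmaF := filtration_sigma hF; have subF := filtration_sub hF.
split=> [acc V t hV tT|acc V t m hV tT hm hge].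
  by apply: acc => //; [case: hphi => + _ _; apply|exact: aeW].
apply: filterS2 (acc V t hV tT) (le_Essinf P _ (sigmaF t) (subF t) _ _ hge) => w.
rewrite !indic_nonneg_boundE; case: ifP => // _ accw mw.
exact: le_trans mw accw.
Qed.

Lemma semiweak_acceptance_nonnegP :
  semiweak_acceptance_Essinf P F T p phi <-> semiweak_acceptance_nonneg P F T p phi.
Proof.
have sigmaF := filtration_sigma hF; have subF := filtration_sub hF.
split=> [acc V t m hV tT hm V0 hge|acc V t hV tT].
  apply: filterS2 (filterI (acc V t hV tT) (le_Essinf P _ (sigmaF t) (subF t) _ _ hge))
    (filterI (Essinf_ge P _ (sigmaF t) (subF t) _ hm) V0) => w [accw mw] [mEw V0w].
  by move: accw; rewrite indic_nonneg_boundE V0w => accw; apply: le_trans mEw _;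
    exact: le_trans mw accw.
have ME := Essinf_supE P _ (sigmaF t) (subF t) (phi t.+1 V).
pose m w := if (0 <= V t w)%R then Essinf_sup P (F t) (phi t.+1 V) w else -oo.
have hm : inL0bar (F t) m.
  apply/(emeas_wrtP (sigmaF t))/measurable_fun_ifT.
  - apply: measurable_fun_ler; first exact: measurable_cst.
    exact/(meas_wrtP (sigmaF t))/(hV t (ltnW tT)).1.
  - exact/(emeas_wrtP (sigmaF t))/(Essinf_sup_meas_wrt P _ (sigmaF t) (subF t)).
  - exact: measurable_cst.
have hge : ege P (phi t.+1 (nonneg_restrict t V)) m.
  apply: filterS2 (dynLM_succ_le_nonneg_restrict _ _ tT hV)
    (filterI (Essinf_le P _ (sigmaF t) (subF t) (phi t.+1 V)) ME) => w le [Ele MEw].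
  rewrite /m; case: ifP => [V0|_]; last exact: leNye.
  by rewrite -MEw; exact: le_trans Ele (le V0).
have accW := acc _ t m (inVp_nonneg_restrict _ _ (ltnW tT) hV) tT hm
  (aeW _ (nonneg_restrict_ge0 t V)) hge.
apply: filterS2 (filterI (dynLM_nonneg_restrict _ _ (ltnW tT) hV) ME) accW.
move=> w [eq MEw]; rewrite indic_nonneg_boundE /m.
by case: ifP => [V0|_ _]; [rewrite eq // MEw|exact: leNye].
Qed.

End acceptance.

Section rejection_by_duality.
Context {d : measure_display} {Omega : measurableType d} {R : realType}.
Local Notation process := (@process d Omega R).

Definition dual_dyn (phi : nat -> process -> Omega -> \bar R) :
  nat -> process -> Omega -> \bar R := fun t V w => - phi t (oppV V) w.

Context {P : probability Omega R} {F : nat -> set (set Omega)} {T : nat} {p : pexp}.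
Hypothesis hF : is_filtration F.
Context {phi : nat -> process -> Omega -> \bar R}.

Lemma dynLM_dual : dynLM P F T p phi -> dynLM P F T p (dual_dyn phi).
Proof.
case=> meas loc mono; split.
- move=> t V tT hV.
  apply: (emeas_wrtN (filtration_sigma hF t)); exact: meas t _ tT (inVpN hF _ hV).
- move=> t V A tT hV FA; rewrite /dual_dyn -mdot_oppV.
  by apply: filterS (loc t _ A tT (inVpN hF _ hV) FA) => w; rewrite !muleN => ->.
- move=> t V W tT hV hW VW.
  have WV : ple P T (oppV W) (oppV V).
    by move=> s sT; apply: filterS (VW s sT) => w; rewrite lerN2.
  by apply: filterS (mono t _ _ tT (inVpN hF _ hW) (inVpN hF _ hV) WV) => w; rewrite leeN2.
Qed.

Lemma EsssupN (G : set (set Omega)) (m : Omega -> \bar R) w :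
  Esssup P G (fun w => - m w) w = - Essinf P G m w.
Proof. by rewrite /Esssup; congr (- Essinf _ _ _ _); apply/funext => w'; rewrite oppeK. Qed.

Lemma semiweak_rejection_dual :
  semiweak_rejection P F T p phi <-> semiweak_acceptance P F T p (dual_dyn phi).
Proof.
have sigmaF := filtration_sigma hF.
split=> rej V t m hV tT hm hge.
- have hge' : ege P (fun w => - m w) (phi t.+1 (oppV V)).
    by apply: filterS hge => w; rewrite leeNr.
  have := rej _ t _ (inVpN hF _ hV) tT (emeas_wrtN (sigmaF t.+1) _ hm) hge'.
  apply: filterS => w; rewrite indic_nonneg_boundE indic_nonpos_boundE oppVE oppr_le0.
  by case: ifP => _ h; [rewrite /dual_dyn leeNr -EsssupN|exact: leNye].
- have hge' : ege P (dual_dyn phi t.+1 (oppV V)) (fun w => - m w).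
    by apply: filterS hge => w; rewrite /dual_dyn oppVK leeN2.
  have := rej _ t _ (inVpN hF _ hV) tT (emeas_wrtN (sigmaF t.+1) _ hm) hge'.
  apply: filterS => w; rewrite indic_nonneg_boundE indic_nonpos_boundE oppVE oppr_ge0.
  rewrite /dual_dyn oppVK.
  by case: ifP => _ h; [rewrite /Esssup leeNr|exact: leey].
Qed.

Lemma semiweak_rejection_Esssup_dual :
  semiweak_rejection_Esssup P F T p phi <-> semiweak_acceptance_Essinf P F T p (dual_dyn phi).
Proof.
split=> rej V t hV tT; have := rej _ t (inVpN hF _ hV) tT.
- apply: filterS => w; rewrite indic_nonneg_boundE indic_nonpos_boundE oppVE oppr_le0.
  by case: ifP => _ h; [rewrite /dual_dyn leeNr; exact: h|exact: leNye].
- apply: filterS => w; rewrite indic_nonneg_boundE indic_nonpos_boundE oppVE oppr_ge0.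
  rewrite /dual_dyn oppVK.
  by case: ifP => _ h; [rewrite /Esssup leeNr; exact: h|exact: leey].
Qed.

Lemma semiweak_rejection_nonpos_dual :
  semiweak_rejection_nonpos P F T p phi <-> semiweak_acceptance_nonneg P F T p (dual_dyn phi).
Proof.
have sigmaF := filtration_sigma hF.
split=> rej V t m hV tT hm V0 hge.
- have V0' : {ae P, forall w, (oppV V t w <= 0)%R}.
    by apply: filterS V0 => w; rewrite oppVE oppr_le0.
  have hge' : ege P (fun w => - m w) (phi t.+1 (oppV V)).
    by apply: filterS hge => w; rewrite leeNr.
  have := rej _ t _ (inVpN hF _ hV) tT (emeas_wrtN (sigmaF t) _ hm) V0' hge'.
  by apply: filterS => w; rewrite /dual_dyn leeNr.
- have V0' : {ae P, forall w, (0 <= oppV V t w)%R}.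
    by apply: filterS V0 => w; rewrite oppVE oppr_ge0.
  have hge' : ege P (dual_dyn phi t.+1 (oppV V)) (fun w => - m w).
    by apply: filterS hge => w; rewrite /dual_dyn oppVK leeN2.
  have := rej _ t _ (inVpN hF _ hV) tT (emeas_wrtN (sigmaF t) _ hm) V0' hge'.
  by apply: filterS => w; rewrite /dual_dyn oppVK leeN2.
Qed.

End rejection_by_duality.

Theorem proposition4p8 (d : measure_display) (Omega : measurableType d)
  (R : realType) (P : probability Omega R) (F : nat -> set (set Omega))
  (T : nat) (p : pexp) (phi : nat -> process -> Omega -> \bar R)
  (hF : is_filtration F) (hphi : dynLM P F T p phi) :
  (* acceptance *)
  let A1 := forall (V : process) (t : nat) (m : Omega -> \bar R),
      inVp P F T p V -> (t < T)%N -> inL0bar (F t.+1) m ->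
      ege P (phi t.+1 V) m ->
      ege P (phi t V) (fun w => (\1_[set w' | (0 <= V t w')%R] w)%:E
                                  * Essinf P (F t) m w
                                + (\1_[set w' | (V t w' < 0)%R] w)%:E * -oo) in
  let A2 := forall (V : process) (t : nat),
      inVp P F T p V -> (t < T)%N ->
      ege P (phi t V) (fun w => (\1_[set w' | (0 <= V t w')%R] w)%:E
                                  * Essinf P (F t) (phi t.+1 V) w
                                + (\1_[set w' | (V t w' < 0)%R] w)%:E * -oo) in
  let A3 := forall (V : process) (t : nat) (m : Omega -> \bar R),
      inVp P F T p V -> (t < T)%N -> inL0bar (F t) m ->
      {ae P, forall w, (0 <= V t w)%R} ->
      ege P (phi t.+1 V) m -> ege P (phi t V) m in
  (* rejection *)
  let R1 := forall (V : process) (t : nat) (m : Omega -> \bar R),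
      inVp P F T p V -> (t < T)%N -> inL0bar (F t.+1) m ->
      ege P m (phi t.+1 V) ->
      ege P (fun w => (\1_[set w' | (V t w' <= 0)%R] w)%:E
                        * Esssup P (F t) m w
                      + (\1_[set w' | (0 < V t w')%R] w)%:E * +oo) (phi t V) in
  let R2 := forall (V : process) (t : nat),
      inVp P F T p V -> (t < T)%N ->
      ege P (fun w => (\1_[set w' | (V t w' <= 0)%R] w)%:E
                        * Esssup P (F t) (phi t.+1 V) w
                      + (\1_[set w' | (0 < V t w')%R] w)%:E * +oo) (phi t V) in
  let R3 := forall (V : process) (t : nat) (m : Omega -> \bar R),
      inVp P F T p V -> (t < T)%N -> inL0bar (F t) m ->
      {ae P, forall w, (V t w <= 0)%R} ->
      ege P m (phi t.+1 V) -> ege P m (phi t V) in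
  [/\ (A1 <-> A2), (A2 <-> A3), (R1 <-> R2) & (R2 <-> R3)].
Proof.
move=> A1 A2 A3 R1 R2 R3.
have hdual := dynLM_dual hF hphi.
split.
- exact (semiweak_acceptance_EssinfP hF hphi).
- exact (semiweak_acceptance_nonnegP hF hphi).
- exact (iff_trans (semiweak_rejection_dual hF)
    (iff_trans (semiweak_acceptance_EssinfP hF hdual)
       (iff_sym (semiweak_rejection_Esssup_dual hF)))).
- exact (iff_trans (semiweak_rejection_Esssup_dual hF)
    (iff_trans (semiweak_acceptance_nonnegP hF hdual)
       (iff_sym (semiweak_rejection_nonpos_dual hF)))).
Qed.
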